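(* Let $M,M'\in\mathbb{C}^{2\times 2}$ be nonsingular matrices with $M'=M+\delta I$ for some nonzero $\delta\in\mathbb{C}$, where $M$ has distinct eigenvalues. If the two eigenvalues of $M$ have equal absolute value and the two eigenvalues of $M'$ have equal absolute value, then there exist $r,s\in\mathbb{R}$ such that $\mathrm{tr}(M)=r\delta$ and $\det(M)=s\delta^2$. *)

From HB Require Import structures.
From mathcomp Require Import all_boot all_order all_algebra.
From mathcomp Require Import reals.
From mathcomp.real_closed Require Export complex.
Set Implicit Arguments.
Unset Strict Implicit.
Unset Printing Implicit Defensive.
Import Order.TTheory GRing.Theory Num.Theory.
Local Open Scope ring_scope.

(** Divide the eigenvalues [a <> b] of [M] by [delta]: [u = a / delta] and
    [v = b / delta] satisfy [|u| = |v|] and [|u + 1| = |v + 1|].  Expanding the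
    squared norms, the pairs [u, conj u] and [v, conj v] have the same sum and
    product, so [v] is a root of [(X - u) (X - conj u)]; as [v <> u],
    [v = conj u].  Hence [tr M / delta = u + conj u] and
    [det M / delta^2 = u conj u] are real. *)
From HB Require Import structures.
From mathcomp Require Import all_boot all_order all_algebra.
From mathcomp Require Import reals.
From mathcomp.real_closed Require Import complex.
From mathcomp Require Import ring.
Set Implicit Arguments.
Unset Strict Implicit.
Unset Printing Implicit Defensive.
Import Order.TTheory GRing.Theory Num.Theory.
Local Open Scope ring_scope.

Lemma mx2_eigenvalue_root (F : fieldType) (A : 'M[F]_2) (a : F) :
  eigenvalue A a -> a ^+ 2 - \tr A * a + \det A = 0.
Proof.
rewrite eigenvalue_root_char => /rootP.
rewrite horner_coef size_char_poly !big_ord_recr big_ord0 /= add0r.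
have /monicP := char_poly_monic A; rewrite /lead_coef size_char_poly /= => ->.
by rewrite char_poly_det (char_poly_trace A erefl) expr0 expr1 => <-; ring.
Qed.

Lemma mx2_trace_det_eigenvalues (F : fieldType) (A : 'M[F]_2) (a b : F) :
  a != b -> eigenvalue A a -> eigenvalue A b ->
  \tr A = a + b /\ \det A = a * b.
Proof.
move=> neq_ab /mx2_eigenvalue_root root_a /mx2_eigenvalue_root root_b.
have tr_ab : \tr A = a + b.
  have : (a - b) * (a + b - \tr A) = 0.
    by rewrite -[RHS](subrr 0) -{1}root_a -root_b; ring.
  by move/eqP; rewrite mulf_eq0 !subr_eq0 (negPf neq_ab) => /eqP.
split=> //; apply/eqP; rewrite -subr_eq0; apply/eqP.
by rewrite -root_a tr_ab; ring.
Qed.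

Lemma eigenvalue_add_scalar (F : fieldType) (n : nat) (A : 'M[F]_n) (a d : F) :
  eigenvalue A a -> eigenvalue (A + d%:M) (a + d).
Proof.
move=> /eigenvalueP [v Av_a v_neq0]; apply/eigenvalueP; exists v => //.
by rewrite mulmxDr Av_a mul_mx_scalar scalerDl.
Qed.

Lemma eq_conjC_of_norms (C : numClosedFieldType) (u v : C) :
  u != v -> `|u| = `|v| -> `|u + 1| = `|v + 1| -> v = u^*.
Proof.
move=> neq_uv norm_uv norm_uv1.
have prod_uv : u * u^* = v * v^* by rewrite -!normCK norm_uv.
have sq_uv1 : (u + 1) * (u^* + 1) = (v + 1) * (v^* + 1).
  by move: (congr1 (fun x => x ^+ 2) norm_uv1); rewrite /= !normCK !rmorphD rmorph1.
have sum_uv : u + u^* - (v + v^*) = 0.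
  have -> : u + u^* - (v + v^*) =
      ((u + 1) * (u^* + 1) - (v + 1) * (v^* + 1)) - (u * u^* - v * v^*) by ring.
  by rewrite sq_uv1 prod_uv !subrr.
have : (v - u) * (v - u^*) = 0.
  have -> : (v - u) * (v - u^*) = (u * u^* - v * v^*) - v * (u + u^* - (v + v^*)) by ring.
  by rewrite sum_uv prod_uv subrr mulr0 subr0.
by move/eqP; rewrite mulf_eq0 !subr_eq0 eq_sym (negPf neq_uv) => /eqP.
Qed.

Lemma complex_conj_fixed (R : rcfType) (x : R[i]) :
  x^* = x -> exists r : R, x = r%:C%C.
Proof. by move=> /eqP; rewrite -CrealE => /complex_realP. Qed.

Theorem corollary4p8 (R : realType) (M M' : 'M[R[i]]_2) (delta : R[i]) :
  M \in unitmx -> M' \in unitmx ->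
  delta != 0 -> M' = M + delta%:M ->
  (exists a b : R[i], [/\ a != b, eigenvalue M a & eigenvalue M b]) ->
  (forall a b : R[i], eigenvalue M a -> eigenvalue M b -> `|a| = `|b|) ->
  (forall a b : R[i], eigenvalue M' a -> eigenvalue M' b -> `|a| = `|b|) ->
  exists r s : R, \tr M = (r%:C)%C * delta /\ \det M = (s%:C)%C * delta ^+ 2.
Proof.
move=> _ _ delta_neq0 -> [a [b [neq_ab eig_a eig_b]]] normM normM'.
have [-> ->] := mx2_trace_det_eigenvalues neq_ab eig_a eig_b.
set u := a / delta; set v := b / delta.
have shift w : w / delta + 1 = (w + delta) / delta by rewrite mulrDl divff.
have neq_uv : u != v by apply: contra neq_ab => /eqP/(divIf delta_neq0) ->.
have v_conj : v = u^*.
  apply: eq_conjC_of_norms => //; first by rewrite !normf_div (normM a b).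
  rewrite !shift !normf_div; congr (_ / _).
  by apply: normM'; apply: eigenvalue_add_scalar.
have [r real_r] : exists r : R, u + u^* = r%:C%C.
  by apply: complex_conj_fixed; rewrite rmorphD /= conjCK addrC.
have [s real_s] : exists s : R, u * u^* = s%:C%C.
  by apply: complex_conj_fixed; rewrite rmorphM /= conjCK mulrC.
exists r, s; split.
  by rewrite -real_r -v_conj -mulrDl divfK.
by rewrite -real_s -v_conj expr2 mulrACA divfK // divfK.
Qed.
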